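(* Let $m\ge 1$ and let $G$ be the complement of the path graph $P_{2m}$, i.e., the simple graph on vertices $\{1,\dots,2m\}$ in which distinct vertices $i,j$ are adjacent if and only if $|i-j|\ge 2$. Then the number of perfect matchings of $G$ equals $$\sum_{k=0}^{m}(-1)^{m-k}\frac{(m+k)!}{k!\,(m-k)!\,2^{k}}.$$
   Context: A perfect matching of a graph on $2m$ vertices is a set of $m$ edges, no two of which share a vertex. *)

From HB Require Import structures.
From mathcomp Require Import all_boot all_order all_algebra.
Set Implicit Arguments. Unset Strict Implicit. Unset Printing Implicit Defensive.

(* Vertices 1..2m are represented by 'I_(2m) = {0,...,2m-1} (shift by one,
   which does not affect |i - j|). *)

Definition compl_path_adj (n : nat) : rel 'I_n :=
  fun i j => (i.+2 <= j) || (j.+2 <= i).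

Definition perfect_matching (n : nat) (adj : rel 'I_n) (M : {set {set 'I_n}}) : bool :=
  [forall e in M, exists i, exists j, adj i j && (e == [set i; j])] &&
  [forall v, #|[set e in M | v \in e]| == 1].

From HB Require Import structures.
From mathcomp Require Import all_boot all_order all_algebra.
From mathcomp Require Import zify ring.
Set Implicit Arguments. Unset Strict Implicit. Unset Printing Implicit Defensive.
Import GRing.Theory Num.Theory.

(* Expanding along the partner of a fixed vertex gives
   [npm_expand], from which two facts follow: adding one edge {a, b} raises
   the count by the count of V minus {a, b} ([npm_add_edge]), and a complete
   graph on k vertices has [npairings k] perfect matchings ([npm_complete]).

   The complement of P_n is then connected to the complete graph through the
   family [cpath_from t]: the complete graph on 'I_n with only the path edges
   {i, i+1}, t <= i, removed.  On a vertex set made of q vertices below t and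
   all p = n - t vertices from t on, the count depends only on (p, q); adding
   back the edge {t, t+1} shows that it satisfies the recurrence
   c(p+2, q) = c(p+1, q+1) - c(p, q) of the alternating sums
   [alt_sum p q = \sum_k (-1)^k 'C(p-k, k) (p+q-2k-1)!!]
   ([npm_cpath_from_alt_sum]).  Finally [alt_sum (2m) 0] is rewritten into the
   closed form of the statement by reindexing k -> m - k ([alt_sum_closed_form]). *)

Section PerfectMatchings.
Variables (T : finType) (r : rel T).

Definition is_pm (V : {set T}) (M : {set {set T}}) : bool :=
  [forall e in M, exists i, exists j, [&& i \in V, j \in V, r i j & e == [set i; j]]] &&
  [forall v in V, #|[set e in M | v \in e]| == 1].

Definition pmset (V : {set T}) : {set {set {set T}}} := [set M | is_pm V M].

Definition npm (V : {set T}) : nat := #|pmset V|.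

Lemma is_pmP (V : {set T}) (M : {set {set T}}) : reflect
  ((forall e, e \in M -> exists i j, [/\ i \in V, j \in V, r i j & e = [set i; j]]) /\
   (forall v, v \in V -> #|[set e in M | v \in e]| = 1)) (is_pm V M).
Proof.
apply: (iffP andP) => [[/forall_inP H1 /forall_inP H2]|[H1 H2]]; split.
- move=> e /H1 /existsP [i /existsP [j /and4P [? ? ? /eqP ?]]]; by exists i, j.
- by move=> v /H2 /eqP.
- apply/forall_inP => e /H1 [i [j [? ? ? ?]]]; apply/existsP; exists i; apply/existsP; exists j.
  by apply/and4P; split => //; apply/eqP.
- by apply/forall_inP => v /H2 ->.
Qed.

Lemma pm_edge_sub (V : {set T}) M e : is_pm V M -> e \in M -> e \subset V.
Proof.
move=> /is_pmP [H1 _] /H1 [i [j [iV jV _ ->]]].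
by apply/subsetP => z; rewrite !inE => /orP [] /eqP ->.
Qed.

Lemma pm_edge_uniq (V : {set T}) M v e1 e2 : is_pm V M -> v \in V -> e1 \in M -> e2 \in M ->
  v \in e1 -> v \in e2 -> e1 = e2.
Proof.
move=> /is_pmP [_ H2] vV e1M e2M v1 v2.
have /eqP/cards1P [w Hw] := H2 v vV.
have : e1 \in [set e in M | v \in e] by rewrite inE e1M v1.
have : e2 \in [set e in M | v \in e] by rewrite inE e2M v2.
by rewrite Hw !inE => /eqP -> /eqP ->.
Qed.

Lemma pm_remove_edge (V : {set T}) M x y : is_pm V M -> x \in V -> y \in V ->
  [set x; y] \in M -> is_pm (V :\ x :\ y) (M :\ [set x; y]).
Proof.
move=> HM xV yV xyM; move/is_pmP: (HM) => [H1 H2]; apply/is_pmP; split.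
- move=> e; rewrite !inE => /andP [ne eM].
  have [i [j [iV jV rij Ee]]] := H1 e eM.
  have off z : z \in e -> (z != x) && (z != y).
    move=> ze; apply/andP; split; apply: contra_neq ne => ?; subst z;
      by apply: (pm_edge_uniq HM _ eM xyM ze); rewrite // !inE eqxx ?orbT.
  have /andP [ix iy] : (i != x) && (i != y) by apply: off; rewrite Ee !inE eqxx.
  have /andP [jx jy] : (j != x) && (j != y) by apply: off; rewrite Ee !inE eqxx orbT.
  by exists i, j; rewrite !inE ix iy jx jy iV jV.
- move=> v; rewrite !inE => /and3P [vy vx vV]; rewrite -(H2 v vV).
  apply: eq_card => e; rewrite !inE; case: (e =P [set x; y]) => [->|//].
  by rewrite !inE (negbTE vx) (negbTE vy) !andbF.
Qed.

Lemma pm_add_edge (V : {set T}) M x y : x \in V -> y \in V -> r x y ->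
  is_pm (V :\ x :\ y) M -> is_pm V ([set x; y] |: M).
Proof.
move=> xV yV rxy HM; move/is_pmP: (HM) => [H1 H2]; apply/is_pmP; split.
- move=> e; rewrite !inE => /orP [/eqP ->|eM]; first by exists x, y.
  have [i [j [iV jV rij Ee]]] := H1 e eM.
  by exists i, j; split => //; [move: iV | move: jV]; rewrite !inE => /and3P [].
- move=> v vV; case vxy: (v \in [set x; y]).
  + apply/eqP/cards1P; exists [set x; y]; apply/setP => e; rewrite !inE.
    case: (e =P [set x; y]) => [->|_]; rewrite ?vxy //=; apply/negbTE/negP => /andP [eM ve].
    move/subsetP: (pm_edge_sub HM eM) => /(_ v ve); rewrite !inE.
    by case/set2P: vxy => ->; rewrite eqxx ?andbF.
  + have vV' : v \in V :\ x :\ y by move: vxy; rewrite !inE vV => /norP [-> ->].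
    rewrite -(H2 v vV'); apply: eq_card => e; rewrite !inE.
    by case: (e =P [set x; y]) => [->|]; rewrite ?vxy ?andbF.
Qed.

Lemma npm_through_edge (V : {set T}) x y : x \in V -> y \in V -> r x y ->
  #|[set M in pmset V | [set x; y] \in M]| = npm (V :\ x :\ y).
Proof.
move=> xV yV rxy.
have xy_notin M : M \in pmset (V :\ x :\ y) -> [set x; y] \notin M.
  rewrite inE => HM; apply/negP => /(pm_edge_sub HM) /subsetP /(_ x).
  by rewrite !inE !eqxx andbF => /(_ isT).
rewrite /npm -(@card_in_imset _ _ (fun M' => [set x; y] |: M') (pmset (V :\ x :\ y)));
  last first.
  move=> M1 M2 H1 H2 /= E.
  by rewrite -(setU1K (xy_notin _ H1)) -(setU1K (xy_notin _ H2)) E.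
apply: eq_card => M; rewrite inE; apply/andP/imsetP.
- rewrite inE => -[HM xyM]; exists (M :\ [set x; y]); last by rewrite setD1K.
  by rewrite inE pm_remove_edge.
- move=> [M' HM' ->]; rewrite !inE eqxx; split => //.
  by apply: pm_add_edge; rewrite // -inE.
Qed.

Hypotheses (rsym : symmetric r) (rirr : irreflexive r).

Lemma npm_expand (V : {set T}) x : x \in V ->
  npm V = \sum_(y | (y \in V) && r x y) npm (V :\ x :\ y).
Proof.
move=> xV.
have E y : (y \in V) && r x y ->
    npm (V :\ x :\ y) = \sum_(M in pmset V) nat_of_bool ([set x; y] \in M).
  case/andP => yV rxy; rewrite -npm_through_edge // -sum1_card big_mkcond /=.
  by rewrite [RHS]big_mkcond; apply: eq_bigr => M _; rewrite inE; case: (_ \in _).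
rewrite (eq_bigr _ E) exchange_big /= /npm -sum1_card; apply: eq_bigr => M.
rewrite inE => HM; move/is_pmP: (HM) => [H1 H2].
have /eqP/cards1P [e0 He0] := H2 x xV.
have : e0 \in [set e in M | x \in e] by rewrite He0 set11.
rewrite inE => /andP [e0M xe0].
have [i [j [iV jV rij Ee]]] := H1 e0 e0M.
have [y0 [y0V rxy0 E0]] : exists y0, [/\ y0 \in V, r x y0 & e0 = [set x; y0]].
  move: xe0; rewrite Ee !inE => /orP [] /eqP ?; subst x; first by exists j.
  by exists i; rewrite rsym setUC.
rewrite (bigD1 y0) ?y0V ?rxy0 //= -E0 e0M big1 // => y /andP [/andP [yV rxy] yn].
apply/eqP; rewrite eqb0; apply/negP => yM.
have := pm_edge_uniq HM xV yM e0M; rewrite !inE eqxx xe0 => /(_ isT isT) E1.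
have : y \in [set x; y] by rewrite !inE eqxx orbT.
rewrite E1 E0 !inE (negbTE yn) orbF => /eqP yx; subst y.
by rewrite rirr in rxy.
Qed.

End PerfectMatchings.

Lemma pmset_ext (T : finType) (r1 r2 : rel T) (V : {set T}) :
  {in V &, r1 =2 r2} -> pmset r1 V = pmset r2 V.
Proof.
move=> r12; apply/setP => M; rewrite !inE.
apply/is_pmP/is_pmP => [][H1 H2]; split => // e /H1 [i [j [iV jV rij Ee]]];
  by exists i, j; split; rewrite // ?r12 // -r12.
Qed.

Lemma npm_ext (T : finType) (r1 r2 : rel T) (V : {set T}) :
  {in V &, r1 =2 r2} -> npm r1 V = npm r2 V.
Proof. by move=> r12; rewrite /npm (pmset_ext r12). Qed.

(* Deletion-contraction: if r' is r with the extra edge {a, b}, the matchings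
   of r' not using {a, b} are those of r, the others those of V - {a, b}. *)
Lemma npm_add_edge (T : finType) (r r' : rel T) (V : {set T}) a b :
  symmetric r -> irreflexive r -> symmetric r' -> irreflexive r' ->
  a \in V -> b \in V -> ~~ r a b ->
  {in V &, forall i j, r' i j = [|| r i j, (i == a) && (j == b) | (i == b) && (j == a)]} ->
  npm r' V = npm r V + npm r (V :\ a :\ b).
Proof.
move=> rs ri rs' ri' aV bV nab r'E.
have r'ab : r' a b by rewrite r'E // !eqxx orbT.
have anb : a != b by apply: contraTneq r'ab => ->; rewrite ri'.
have r'_off c : {in V :\ a :\ c &, r' =2 r}.
  move=> i j; rewrite !inE => /and3P [_ ia iV] /and3P [_ ja jV].
  by rewrite r'E // (negbTE ia) (negbTE ja) !andbF !orbF.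
rewrite (npm_expand rs' ri' aV) (bigD1 b) ?bV ?r'ab //= addnC (npm_ext (r'_off b)).
congr (_ + _); rewrite (npm_expand rs ri aV); apply: eq_big => [y|y _].
- case yV: (y \in V) => //=; rewrite r'E // eqxx (negbTE anb) /=.
  by case: (y =P b) => [->|_]; rewrite ?(negbTE nab) ?andbT ?andbF ?orbF.
- exact: npm_ext.
Qed.

Lemma npm_set0 (T : finType) (r : rel T) : npm r set0 = 1.
Proof.
apply/eqP/cards1P; exists set0; apply/setP => M; rewrite !inE.
apply/idP/idP => [/is_pmP [H1 _]|/eqP ->]; last by apply/is_pmP; split => ?; rewrite inE.
by apply/eqP/setP => e; rewrite inE; apply/negP => /H1 [i [j []]]; rewrite inE.
Qed.

(* Number of ways to pair up k objects: (k-1)!! for k even, 0 for k odd. *)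
Fixpoint npairings (k : nat) : nat :=
  match k with 0 => 1 | 1 => 0 | k'.+2 => k'.+1 * npairings k' end.

Lemma npm_complete (T : finType) (V : {set T}) :
  npm (fun i j : T => i != j) V = npairings #|V|.
Proof.
have rs : symmetric (fun i j : T => i != j) by move=> i j; rewrite eq_sym.
have ri : irreflexive (fun i j : T => i != j) by move=> i; rewrite eqxx.
have [k HV] : exists k, #|V| = k by eexists.
rewrite HV; elim/ltn_ind: k V HV => k IH V HV.
have [V0|[x xV]] := set_0Vmem V.
  by move: HV; rewrite V0 cards0 => <-; rewrite npm_set0.
have HVx : #|V :\ x| = k.-1 by move: HV; rewrite (cardsD1 x) xV; lia.
have E y : (y \in V) && (x != y) -> npm (fun i j : T => i != j) (V :\ x :\ y) = npairings k.-2.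
  by case/andP => yV xy; apply: IH; move: HVx; rewrite (cardsD1 y) !inE yV eq_sym xy; lia.
rewrite (npm_expand rs ri xV) (eq_bigr _ E) sum_nat_const.
have -> : #|[pred y | (y \in V) && (x != y)]| = k.-1.
  by rewrite -HVx; apply: eq_card => y; rewrite !inE eq_sym andbC.
have : (0 < k)%N by rewrite -HV; apply/card_gt0P; exists x.
by case: k {IH HV E HVx} => [|[|k]].
Qed.

Lemma npairings_double j : npairings (2 * j) * (j`! * 2 ^ j) = (2 * j)`!.
Proof.
elim: j => [//|j IH]; rewrite (_ : 2 * j.+1 = (2 * j).+2); last lia.
by rewrite /= !factS expnS -IH; ring.
Qed.

Lemma bin_npairings m j : j <= m ->
  'C(m + j, m - j) * npairings (2 * j) * (j`! * (m - j)`! * 2 ^ j) = (m + j)`!.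
Proof.
move=> jm; have := bin_fact (_ : m - j <= m + j).
rewrite (_ : m + j - (m - j) = 2 * j); last lia.
by rewrite -npairings_double => <-; [ring | lia].
Qed.

(* The family of graphs interpolating between the complement of P_n (t = 0)
   and the complete graph (t >= n - 1). *)
Section PathComplementFamily.
Variable n : nat.

Definition cpath_from (t : nat) : rel 'I_n := fun i j =>
  (i != j :> nat) && ~~ [&& t <= i, t <= j & (i.+1 == j) || (j.+1 == i)].

Definition add_tail (A : {set 'I_n}) (t : nat) : {set 'I_n} := A :|: [set i : 'I_n | t <= i].

Lemma cpath_from_sym t : symmetric (cpath_from t).
Proof. by move=> i j; rewrite /cpath_from; lia. Qed.

Lemma cpath_from_irr t : irreflexive (cpath_from t).
Proof. by move=> i; rewrite /cpath_from; lia. Qed.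

(* Once at most one vertex lies from t on, no edge is missing. *)
Lemma npm_cpath_from_top t (V : {set 'I_n}) : n <= t.+1 ->
  npm (cpath_from t) V = npairings #|V|.
Proof.
move=> nt; rewrite -npm_complete; apply: npm_ext => i j _ _.
by rewrite /cpath_from -val_eqE /=; have := ltn_ord i; have := ltn_ord j; lia.
Qed.

(* Adding back the path edge {t, t+1}: moving vertex t from the path part to
   the part below, the count splits as in deletion-contraction. *)
Lemma npm_cpath_from_step t (A : {set 'I_n}) (a b : 'I_n) :
  a = t :> nat -> b = t.+1 :> nat -> A \subset [set i : 'I_n | i < t] ->
  npm (cpath_from t.+1) (add_tail (a |: A) t.+1) =
  npm (cpath_from t) (add_tail A t) + npm (cpath_from t.+2) (add_tail A t.+2).
Proof.
move=> aval bval /subsetP Alow.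
have below i : i \in A -> i < t by move=> /Alow; rewrite inE.
have shift : add_tail (a |: A) t.+1 = add_tail A t.
  apply/setP => i; rewrite !inE -val_eqE /= aval.
  by case iA: (i \in A); [have := below i iA|]; rewrite /= ?orbT //; lia.
have aV : a \in add_tail A t by rewrite !inE aval leqnn orbT.
have bV : b \in add_tail A t by rewrite !inE bval leqnSn orbT.
have nab : ~~ cpath_from t a b by rewrite /cpath_from aval bval; lia.
rewrite shift (npm_add_edge (cpath_from_sym t) (cpath_from_irr t)
  (cpath_from_sym t.+1) (cpath_from_irr t.+1) aV bV nab); last first.
  by move=> i j _ _; rewrite /cpath_from -!val_eqE /= aval bval; lia.
have -> : add_tail A t :\ a :\ b = add_tail A t.+2.
  apply/setP => i; rewrite !inE -!val_eqE /= aval bval.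
  by case iA: (i \in A); [have := below i iA|]; rewrite /= ?orbT ?andbT; lia.
congr (_ + _); apply: npm_ext => i j; rewrite !inE.
by case iA: (i \in A); [have := below i iA|]; case jA: (j \in A);
  try have := below j jA; rewrite /cpath_from /=; lia.
Qed.

End PathComplementFamily.

Local Open Scope ring_scope.

Definition alt_term (p q k : nat) : rat :=
  (-1) ^+ k * ('C(p - k, k) * npairings (p + q - 2 * k))%:R.

Definition alt_sum (p q : nat) : rat := \sum_(k < p.+1) alt_term p q k.

Lemma alt_term_vanish p q k : (p < 2 * k)%N -> alt_term p q k = 0.
Proof. by move=> h; rewrite /alt_term bin_small ?mul0n ?mulr0 //; lia. Qed.

Lemma alt_sum_widen p q N : (p < N)%N -> \sum_(k < N) alt_term p q k = alt_sum p q.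
Proof.
move=> pN; rewrite /alt_sum -!(big_mkord xpredT) (big_cat_nat _ (n := p.+1)) //=.
rewrite [X in _ + X]big_nat_cond [X in _ + X]big1 ?addr0 // => k /andP [/andP [? ?] _].
by apply: alt_term_vanish; lia.
Qed.

Lemma alt_sum0 q : alt_sum 0 q = (npairings q)%:R.
Proof. by rewrite /alt_sum big_ord1 /alt_term expr0 mul1r bin0 mul1n add0n subn0. Qed.

Lemma alt_sum1 q : alt_sum 1 q = (npairings q.+1)%:R.
Proof.
rewrite /alt_sum big_ord_recr big_ord1 /alt_term /= mulr0 addr0.
by rewrite expr0 mul1r bin0 mul1n add0n.
Qed.

Lemma alt_sum_rec p q : alt_sum p.+2 q = alt_sum p.+1 q.+1 - alt_sum p q.
Proof.
rewrite -(@alt_sum_widen p.+1 q.+1 p.+3) // -(@alt_sum_widen p q p.+2) //.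
rewrite /alt_sum big_ord_recl [X in _ = X - _]big_ord_recl -addrA; congr (_ + _).
  by rewrite /alt_term !bin0 (_ : (p.+2 + q - 2 * 0 = p.+1 + q.+1 - 2 * 0)%N) //; lia.
rewrite -sumrB; apply: eq_bigr => k _; rewrite /alt_term lift0 exprS.
have -> : (p.+2 + q - 2 * k.+1 = p + q - 2 * k)%N by lia.
have -> : (p.+1 + q.+1 - 2 * k.+1 = p + q - 2 * k)%N by lia.
have [kp|pk] := leqP k p.
- have -> : (p.+2 - k.+1 = (p - k).+1)%N by lia.
  have -> : (p.+1 - k.+1 = p - k)%N by lia.
  by rewrite binS mulnDl natrD; ring.
- by rewrite !bin_small ?mul0n; try lia; ring.
Qed.

Lemma npm_cpath_from_alt_sum n p : forall t (A : {set 'I_n}),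
  (t + p = n)%N -> A \subset [set i : 'I_n | (i < t)%N] ->
  (npm (cpath_from t) (add_tail A t))%:R = alt_sum p #|A|.
Proof.
elim/ltn_ind: p => p IH t A tp /subsetP Alow.
have below i : i \in A -> (i < t)%N by move=> /Alow; rewrite inE.
have below_t (c : 'I_n) : c = t :> nat -> #|c |: A| = #|A|.+1.
  by move=> ct; rewrite cardsU1; case: (boolP (c \in A)) => [/below|]; [lia|].
case: p IH tp => [|[|p]] IH tp.
- rewrite npm_cpath_from_top; last lia.
  rewrite alt_sum0; congr (npairings _)%:R; apply: eq_card => i; rewrite !inE.
  by have := ltn_ord i; case: (i \in A) => /=; lia.
- have tn : (t < n)%N by lia.
  rewrite npm_cpath_from_top; last lia.
  rewrite alt_sum1 -(below_t (Ordinal tn)) //; congr (npairings _)%:R.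
  apply: eq_card => i; rewrite !inE -val_eqE /=; have := ltn_ord i.
  by case iA: (i \in A); [have := below i iA|]; rewrite /=; lia.
- have tn : (t < n)%N by lia.
  have t1n : (t.+1 < n)%N by lia.
  have A_low2 : A \subset [set i : 'I_n | (i < t.+2)%N].
    by apply/subsetP => i /below; rewrite inE; lia.
  have aA_low : Ordinal tn |: A \subset [set i : 'I_n | (i < t.+1)%N].
    by apply/subsetP => i; rewrite !inE -val_eqE /= => /orP [/eqP ->|/below]; lia.
  have tp1 : (t.+1 + p.+1 = n)%N by lia.
  have tp2 : (t.+2 + p = n)%N by lia.
  rewrite alt_sum_rec -(IH p (leqW (ltnSn p)) t.+2 A tp2 A_low2).
  rewrite -(below_t (Ordinal tn)) // -(IH p.+1 (ltnSn _) t.+1 _ tp1 aA_low).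
  by rewrite (npm_cpath_from_step (b := Ordinal t1n)) ?natrD ?addrK //; apply/subsetP.
Qed.

Lemma alt_sum_closed_form m :
  alt_sum (2 * m) 0 = \sum_(0 <= k < m.+1)
    (-1) ^+ (m - k)%N * ((m + k)`!)%:R / ((k`! * (m - k)`! * 2 ^ k)%N)%:R.
Proof.
rewrite -(@alt_sum_widen _ _ (2 * m).+1) // -(big_mkord xpredT).
rewrite (big_cat_nat _ (n := m.+1)) //=; last lia.
rewrite [X in _ + X]big_nat_cond [X in _ + X]big1 ?addr0; last first.
  by move=> k /andP [/andP [? ?] _]; apply: alt_term_vanish; lia.
rewrite [RHS]big_nat_rev /=; apply: eq_big_nat => k /andP [_ km].
rewrite add0n subSS.
have mk : (m - k <= m)%N by lia.
have := bin_npairings mk.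
rewrite (_ : (m - (m - k) = k)%N); last lia.
rewrite (_ : (m + (m - k) = 2 * m - k)%N); last lia.
rewrite (_ : (2 * (m - k) = 2 * m + 0 - 2 * k)%N); last lia.
move=> <-; rewrite /alt_term [in RHS]natrM -mulrA mulfK //.
by rewrite pnatr_eq0 -!lt0n !muln_gt0 !fact_gt0 expn_gt0.
Qed.

Lemma perfect_matching_is_pm n (adj : rel 'I_n) (M : {set {set 'I_n}}) :
  perfect_matching adj M = is_pm adj [set: 'I_n] M.
Proof.
rewrite /perfect_matching /is_pm; congr (_ && _).
- apply: eq_forallb_in => e _; apply: eq_existsb => i; apply: eq_existsb => j.
  by rewrite !in_setT.
- by apply: eq_forallb => v; rewrite in_setT.
Qed.

Theorem mainTheorem5 (m : nat) (hm : (1 <= m)%N) :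
  (#|[set M : {set {set 'I_(2 * m)}} |
       @perfect_matching (2 * m)%N (@compl_path_adj (2 * m)%N) M]|)%:R
  = \sum_(0 <= k < m.+1)
      (-1) ^+ (m - k)%N * ((m + k)`!)%:R / ((k`! * (m - k)`! * 2 ^ k)%N)%:R :> rat.
Proof.
have full : add_tail (set0 : {set 'I_(2 * m)}) 0 = [set: 'I_(2 * m)].
  by apply/setP => i; rewrite !inE.
have adjE : {in [set: 'I_(2 * m)] &, compl_path_adj (n := 2 * m) =2 cpath_from 0}.
  by move=> i j _ _; rewrite /compl_path_adj /cpath_from; lia.
have -> : [set M | perfect_matching (compl_path_adj (n := 2 * m)) M] =
          pmset (cpath_from 0) (add_tail set0 0).
  by rewrite full -(pmset_ext adjE); apply/setP => M; rewrite !inE perfect_matching_is_pm.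
rewrite -alt_sum_closed_form -/(npm _ _).
by rewrite (npm_cpath_from_alt_sum (p := 2 * m)) ?cards0 ?sub0set.
Qed.
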